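(* Let $f$ be an essentially sub-linear dimension function. Then $\lim_{x\to 0}\frac{f(x)}{x}=\infty$, and there exist constants $C\ge 1$ and $\delta>0$ such that $\frac{f(x_2)}{x_2}\le C\,\frac{f(x_1)}{x_1}$ whenever $0<x_1<x_2<\delta$.
   Context: A dimension function is an increasing continuous function $f:\mathbb{R}_+\to\mathbb{R}_+$ with $f(r)\to 0$ as $r\to 0$. It is essentially sub-linear if there exists $B>1$ such that $\limsup_{x\to 0}\frac{f(Bx)}{f(x)}<B$. *)

From HB Require Import structures.
From mathcomp Require Import all_boot all_order all_algebra.
From mathcomp Require Import all_classical all_reals all_analysis.
Set Implicit Arguments. Unset Strict Implicit. Unset Printing Implicit Defensive.
Import Order.TTheory GRing.Theory Num.Theory.
Import numFieldNormedType.Exports.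
Local Open Scope classical_set_scope.
Local Open Scope ring_scope.

(* A dimension function: f : R_+ -> R_+ (represented as R -> R, only values on
   (0, +oo) matter), (strictly) increasing, continuous, with f(r) -> 0 as r -> 0+. *)
Definition dimension_function (R : realType) (f : R -> R) : Prop :=
  [/\ (forall x, 0 < x -> 0 <= f x),
      (forall x y, 0 < x -> x < y -> f x < f y),
      {in `]0, +oo[, continuous f} &
      f x @[x --> (0:R)^'+] --> 0].

Definition essentially_sublinear (R : realType) (f : R -> R) : Prop :=
  exists B : R, 1 < B /\
    (limf_esup (fun x => ((f (B * x) / f x)%:E)) (0:R)^'+ < B%:E)%E.

From HB Require Import structures.
From mathcomp Require Import all_boot all_order all_algebra.
From mathcomp Require Import all_classical all_reals all_analysis.
From mathcomp Require Import ring lra.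
Set Implicit Arguments. Unset Strict Implicit. Unset Printing Implicit Defensive.
Import Order.TTheory GRing.Theory Num.Theory.
Import numFieldNormedType.Exports.
Local Open Scope classical_set_scope.
Local Open Scope ring_scope.

(* Essential sub-linearity gives B > 1, q in [1, B) and e > 0 with
   f (B x) <= q f x on (0, e), so the ratio g x = f x / x contracts by the
   factor q / B < 1 from x to B x.  As f is nondecreasing, g changes by at most
   the factor q inside one window [x, B x), and the contraction lets this bound
   persist across any number of windows: g x2 <= q g x1 for x1 <= x2 < e.
   Going n windows down from a fixed y < e multiplies g by at least
   (B / q) ^ n / q, hence g tends to +oo at 0+. *)

Lemma bernoulli_exprn (R : realDomainType) (a : R) (n : nat) :
  0 <= a -> 1 + n%:R * (a - 1) <= a ^+ n.
Proof.
move=> a_ge0; elim: n => [|n IHn]; first by rewrite mul0r addr0 expr0.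
have sq_ge0 : 0 <= n%:R * (a - 1) ^+ 2 :> R by rewrite mulr_ge0 ?sqr_ge0.
have := ler_wpM2l a_ge0 IHn; rewrite exprS -natr1; nra.
Qed.

Lemma exprn_unbounded (R : archiRealFieldType) (a M : R) :
  1 < a -> exists n : nat, M < a ^+ n.
Proof.
move=> a_gt1; have a1_gt0 : 0 < a - 1 by rewrite subr_gt0.
have bound_ge0 : 0 <= `|M| / (a - 1) by rewrite divr_ge0 // ltW.
set n := Num.bound (`|M| / (a - 1)); exists n.
have := archi_boundP bound_ge0; rewrite ltr_pdivrMr // => M_lt.
have := bernoulli_exprn n (ltW (lt_trans ltr01 a_gt1)).
by have := ler_norm M; lra.
Qed.

Lemma limf_esup_lt_near {T : choiceType} {X : filteredType T} (R : realType)
    (F : set_system X) {FF : Filter F} (h : X -> R) (b : R) :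
  (limf_esup (fun x => (h x)%:E) F < b%:E)%E ->
  exists2 q : R, q < b & \forall x \near F, h x <= q.
Proof.
move=> /ereal_inf_lt [_ [V FV <-]]; set s := ereal_sup _ => s_lt_b.
have h_le_s x : V x -> ((h x)%:E <= s)%E by move=> Vx; apply: ereal_sup_ubound; exists x.
move: s_lt_b h_le_s; case: s => [r| //|_ h_le_s].
- rewrite lte_fin => r_lt_b h_le_r; exists r => //.
  by apply: filterS FV => x /h_le_r; rewrite lee_fin.
- exists (b - 1); first by rewrite ltrBlDr ltrDl.
  by apply: filterS FV => x /h_le_s; rewrite leeNy_eq.
Qed.

Lemma near_right0_interval (R : numFieldType) (P : R -> Prop) :
  (\forall x \near (0:R)^'+, P x) -> exists2 e : R, 0 < e & forall x, 0 < x -> x < e -> P x.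
Proof.
move=> /nbhs_ballP [e e_gt0 Pe]; exists e => // x x_gt0 x_lt_e.
by apply: Pe => //; rewrite /ball /= sub0r normrN gtr0_norm.
Qed.

Section SublinearRatio.
Variables (R : archiRealFieldType) (f : R -> R) (B q e : R).
Hypotheses (B_gt1 : 1 < B) (q_gt0 : 0 < q) (q_ltB : q < B).
Hypothesis f_gt0 : forall x, 0 < x -> 0 < f x.
Hypothesis f_le : forall x y, 0 < x -> x <= y -> f x <= f y.
Hypothesis f_scale : forall x, 0 < x -> x < e -> f (B * x) <= q * f x.

Let B_gt0 : 0 < B. Proof. exact: lt_trans ltr01 B_gt1. Qed.

Let ratio_gt0 x : 0 < x -> 0 < f x / x.
Proof. by move=> x_gt0; rewrite divr_gt0 ?f_gt0. Qed.

Lemma ratio_scale x : 0 < x -> x < e -> f (B * x) / (B * x) <= q / B * (f x / x).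
Proof.
move=> x_gt0 x_lt_e.
have -> : q / B * (f x / x) = q * f x / (B * x).
  by field; rewrite !lt0r_neq0.
by rewrite ler_pM2r ?invr_gt0 ?mulr_gt0 ?f_scale.
Qed.

Lemma ratio_quasi_monotone_pow n x1 x2 : 0 < x1 -> x1 <= x2 -> x2 < e ->
  x2 < B ^+ n * x1 -> f x2 / x2 <= q * (f x1 / x1).
Proof.
elim: n x1 => [|n IHn] x1 x1_gt0 x12 x2_lt_e x2_lt_pow.
  by move: (le_lt_trans x12 x2_lt_pow); rewrite mul1r ltxx.
have x1_lt_e : x1 < e := le_lt_trans x12 x2_lt_e.
have x2_gt0 : 0 < x2 := lt_le_trans x1_gt0 x12.
have [x2_lt_Bx1|Bx1_le_x2] := ltP x2 (B * x1).
  apply: (@le_trans _ _ (f x2 / x1)).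
    by rewrite ler_pM2l ?f_gt0 // lef_pV2 ?posrE.
  rewrite mulrA ler_pM2r ?invr_gt0 //; apply: le_trans (f_scale x1_gt0 x1_lt_e).
  exact/f_le/ltW.
move: x2_lt_pow; rewrite exprSr -mulrA => x2_lt_pow.
apply: le_trans (IHn _ (mulr_gt0 B_gt0 x1_gt0) Bx1_le_x2 x2_lt_e x2_lt_pow) _.
rewrite ler_pM2l //; apply: le_trans (ratio_scale x1_gt0 x1_lt_e) _.
by rewrite ger_pMl ?ratio_gt0 // ler_pdivrMr // mul1r ltW.
Qed.

Lemma ratio_quasi_monotone x1 x2 : 0 < x1 -> x1 <= x2 -> x2 < e ->
  f x2 / x2 <= q * (f x1 / x1).
Proof.
move=> x1_gt0 x12 x2_lt_e; have [n x2_lt] := exprn_unbounded (x2 / x1) B_gt1.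
by apply: (@ratio_quasi_monotone_pow n) => //; rewrite -ltr_pdivrMr.
Qed.

Lemma ratio_growth n x y : 0 < x -> B ^+ n * x < y -> y < e ->
  (B / q) ^+ n * (f y / y) <= q * (f x / x).
Proof.
elim: n x => [|n IHn] x x_gt0.
  rewrite !expr0 !mul1r => x_lt_y y_lt_e; exact: ratio_quasi_monotone (ltW x_lt_y) y_lt_e.
move=> Bnx_lt_y y_lt_e; have x_lt_e : x < e.
  apply: le_lt_trans (lt_trans Bnx_lt_y y_lt_e).
  by apply: ler_peMl; [exact: ltW | exact: exprn_ege1 (ltW B_gt1)].
move: Bnx_lt_y; rewrite exprSr -mulrA => Bx_lt_y.
have IH' : (B / q) ^+ n * (f y / y) <= q * (q / B * (f x / x)).
  apply: le_trans (IHn _ (mulr_gt0 B_gt0 x_gt0) Bx_lt_y y_lt_e) _.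
  by rewrite ler_pM2l // ratio_scale.
rewrite exprS -mulrA; apply: le_trans (ler_wpM2l _ IH') _; first by rewrite ltW ?divr_gt0.
suff -> : B / q * (q * (q / B * (f x / x))) = q * (f x / x) by [].
by field; rewrite !lt0r_neq0.
Qed.

Hypothesis e_gt0 : 0 < e.

Lemma ratio_cvgy : f x / x @[x --> (0:R)^'+] --> +oo.
Proof.
apply/cvgryPge => A; pose y := e / 2.
have y_gt0 : 0 < y by rewrite divr_gt0.
have y_lt_e : y < e by rewrite ltr_pdivrMr // ltr_pMr // ltr1n.
have Bq_gt1 : 1 < B / q by rewrite ltr_pdivlMr // mul1r.
have [n An] := exprn_unbounded (q * A / (f y / y)) Bq_gt1.
near=> x.
have x_gt0 : 0 < x by near: x; exact: nbhs_right_gt.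
have Bnx_lt_y : B ^+ n * x < y.
  rewrite mulrC -ltr_pdivlMr ?exprn_gt0 //.
  by near: x; apply: nbhs_right_lt; rewrite divr_gt0 ?exprn_gt0.
rewrite -(ler_pM2l q_gt0); apply: le_trans (ratio_growth x_gt0 Bnx_lt_y y_lt_e).
by rewrite -ler_pdivrMr ?ratio_gt0 // ltW.
Unshelve. all: by end_near.
Qed.

End SublinearRatio.

Lemma dimension_function_gt0 (R : realType) (f : R -> R) :
  dimension_function f -> forall x, 0 < x -> 0 < f x.
Proof.
move=> [f_ge0 f_lt _ _] x x_gt0; have hx_gt0 : 0 < x / 2 by rewrite divr_gt0.
by apply: le_lt_trans (f_ge0 _ hx_gt0) (f_lt _ _ hx_gt0 _); rewrite ltr_pdivrMr // ltr_pMr // ltr1n.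
Qed.

Lemma dimension_function_le (R : realType) (f : R -> R) :
  dimension_function f -> forall x y, 0 < x -> x <= y -> f x <= f y.
Proof.
move=> [_ f_lt _ _] x y x_gt0; rewrite le_eqVlt => /predU1P[-> //|x_lt_y].
exact/ltW/f_lt.
Qed.

Lemma essentially_sublinear_scale (R : realType) (f : R -> R) :
  dimension_function f -> essentially_sublinear f ->
  exists B q e : R, [/\ 1 < B, 1 <= q, q < B, 0 < e &
    forall x, 0 < x -> x < e -> f (B * x) <= q * f x].
Proof.
move=> fdim [B [B_gt1 /limf_esup_lt_near [q q_lt_B near_q]]].
have [e e_gt0 ratio_le_q] := near_right0_interval near_q.
exists B, (Num.max 1 q), e; split => //; first by rewrite le_max lexx.
  by rewrite gt_max B_gt1.
move=> x x_gt0 x_lt_e; rewrite -ler_pdivrMr ?dimension_function_gt0 //.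
by apply: le_trans (ratio_le_q x x_gt0 x_lt_e) _; rewrite le_max lexx orbT.
Qed.

Theorem mainTheorem4 (R : realType) (f : R -> R) :
  dimension_function f -> essentially_sublinear f ->
  (f x / x @[x --> (0:R)^'+] --> +oo) /\
  exists C : R, exists delta : R, 1 <= C /\ 0 < delta /\
    forall x1 x2 : R, 0 < x1 -> x1 < x2 -> x2 < delta ->
      f x2 / x2 <= C * (f x1 / x1).
Proof.
move=> fdim fsub.
have [B [q [e [B_gt1 q_ge1 q_lt_B e_gt0 f_scale]]]] := essentially_sublinear_scale fdim fsub.
have q_gt0 : 0 < q := lt_le_trans ltr01 q_ge1.
have f_gt0 := dimension_function_gt0 fdim; have f_le := dimension_function_le fdim.
split; first exact: (ratio_cvgy B_gt1 q_gt0 q_lt_B f_gt0 f_le f_scale e_gt0).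
exists q, e; split=> //; split=> // x1 x2 x1_gt0 /ltW x12 x2_lt_e.
exact: (ratio_quasi_monotone B_gt1 q_gt0 q_lt_B f_gt0 f_le f_scale).
Qed.
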